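(* For every integer $k\ge1$: (1) for every $(T,\mu)\in\mathcal M_k$, the root has at least one $1$-marked neighbor; (2) for every $(T,\mu)\in\mathcal M_k$ and every vertex $u$ of $T$, if $\mu(u)=1$ then $u$ is a leaf; (3) if $k\ge2$, each marked tree in $\mathcal M_k$ is obtained (by one of the two operations below) from exactly one marked tree in $\mathcal M_{k-1}$; (4) $|\mathcal M_k|=2^{k-1}$.
   Context: A marked tree is a pair $(T,\mu)$ with $T$ a rooted tree and $\mu:V(T)\to\{0,1\}$; marked trees are identified up to isomorphism of rooted marked trees. Define $\mathcal M_k$ (marked trees with $k$ edges) inductively: $\mathcal M_1=\{(T_1,\mu_1)\}$ where $T_1$ is a single edge, the root $v$ has $\mu_1(v)=0$ and its neighbor $u$ has $\mu_1(u)=1$. Given $\mathcal M_{k-1}$, $\mathcal M_k$ consists of all marked trees obtained from some element of $\mathcal M_{k-1}$ by exactly one of: (i) adding a new vertex $u$ with $\mu(u)=1$ as a neighbor of the root; (ii) choosing a $1$-marked neighbor $u$ of the root, making $u$ the new root with $\mu(u)=0$, and attaching a new $1$-marked leaf to $u$. Duplicates are included only once. *)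

From mathcomp Require Import all_boot.
From Stdlib Require Lists.List.
Set Implicit Arguments. Unset Strict Implicit. Unset Printing Implicit Defensive.

(* A rooted marked tree: a node carrying its mark (true = 1, false = 0)
   and the (ordered) list of its children.  The neighbours of the root are
   exactly its children.  Order of children is irrelevant: trees are
   compared up to isomorphism of rooted marked trees, [iso] below. *)
Inductive mtree : Type := Node : bool -> seq mtree -> mtree.

Definition mark (t : mtree) : bool := let: Node b _ := t in b.
Definition children (t : mtree) : seq mtree := let: Node _ cs := t in cs.

Inductive iso : mtree -> mtree -> Prop :=
  | iso_node b cs ds : iso_list cs ds -> iso (Node b cs) (Node b ds)
with iso_list : seq mtree -> seq mtree -> Prop :=
  | iso_nil : iso_list [::] [::]
  | iso_cons c cs d ds1 ds2 :
      iso c d -> iso_list cs (ds1 ++ ds2) -> iso_list (c :: cs) (ds1 ++ d :: ds2).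

Definition T1 : mtree := Node false [:: Node true [::]].

Inductive step : mtree -> mtree -> Prop :=
  | step_add m cs : step (Node m cs) (Node m (Node true [::] :: cs))
  (* (ii) a 1-marked neighbour u = Node true ds of the root becomes the new
     root, marked 0; its neighbours are its old children ds, the old root
     (with its remaining children), and a new 1-marked leaf. *)
  | step_reroot m cs1 ds cs2 :
      step (Node m (cs1 ++ Node true ds :: cs2))
           (Node false (Node true [::] :: Node m (cs1 ++ cs2) :: ds)).

Definition obtained_from (s t : mtree) : Prop :=
  exists s', step s s' /\ iso t s'.

Fixpoint inM (k : nat) (t : mtree) : Prop :=
  match k with
  | 0 => False
  | k'.+1 =>
      match k' with
      | 0 => iso t T1
      | _ => exists s, inM k' s /\ obtained_from s t
      end
  end.

Inductive subtree (s : mtree) : mtree -> Prop :=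
  | st_refl : subtree s s
  | st_child t c : List.In c (children t) -> subtree s c -> subtree s t.

Definition nonroot_vertex (s t : mtree) : Prop :=
  exists c, List.In c (children t) /\ subtree s c.

(* Leaves (vertices of degree 1).  The root has degree = #children;
   a non-root vertex has degree = 1 + #children. *)
Definition root_is_leaf (t : mtree) : Prop := size (children t) = 1.
Definition nonroot_is_leaf (s : mtree) : Prop := children s = [::].

(* Every tree of M_k is a caterpillar: a path of 0-marked vertices starting at
   the root, carrying a_0 > 0 one-marked leaves at the root and a_i >= 0 at the
   i-th vertex of the path.  The only 1-marked neighbours of the root are
   leaves, so operation (i) sends (a_0, a_1, ...) to (a_0 + 1, a_1, ...) and
   operation (ii) sends it to (1, a_0 - 1, a_1, ...).  These two maps are
   injective with disjoint images, so the classes of M_k correspond bijectively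
   to the (k-1)-bit words recording which operation was applied at each step;
   this gives (3) and (4), and (1) and (2) are read off caterpillars.
   Isomorphism is decided by a canonical form that recursively sorts children. *)

From HB Require Import structures.
From mathcomp Require Import all_boot.
From Stdlib Require List.

Set Implicit Arguments. Unset Strict Implicit. Unset Printing Implicit Defensive.

Lemma mtree_ind' (P : mtree -> Prop) :
  (forall b cs, (forall c, List.In c cs -> P c) -> P (Node b cs)) ->
  forall t, P t.
Proof.
move=> IH; fix F 1 => -[b cs]; apply: IH.
elim: cs => [|c cs IHcs] d; first by case.
by case=> [<-|/IHcs]; first exact: F.
Qed.

Fixpoint gentree_of_mtree (t : mtree) : GenTree.tree nat :=
  let: Node b cs := t in GenTree.Node b (map gentree_of_mtree cs).

Fixpoint mtree_of_gentree (x : GenTree.tree nat) : option mtree :=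
  if x is GenTree.Node n xs then Some (Node (n != 0) (pmap mtree_of_gentree xs))
  else None.

Lemma gentree_of_mtreeK : pcancel gentree_of_mtree mtree_of_gentree.
Proof.
elim/mtree_ind' => b cs IH /=; congr (Some (Node _ _)); first by case: b.
elim: cs IH => //= c cs IHcs IH; rewrite IH /=; last by left.
by rewrite IHcs // => d cd; apply: IH; right.
Qed.

HB.instance Definition _ := Countable.copy mtree (pcan_type gentree_of_mtreeK).

Definition pickle_le : rel mtree := relpre pickle leq.

Lemma pickle_le_total : total pickle_le.
Proof. by move=> s t; apply: leq_total. Qed.

Lemma pickle_le_trans : transitive pickle_le.
Proof. by move=> s t u; apply: leq_trans. Qed.

Lemma pickle_le_anti : antisymmetric pickle_le.
Proof. by move=> s t /anti_leq/(pcan_inj pickleK). Qed.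

(* Children are sorted by their [pickle] code, which picks one representative
   of every isomorphism class. *)
Fixpoint canon (t : mtree) : mtree :=
  let: Node b cs := t in Node b (sort pickle_le (map canon cs)).

Lemma canon_nodeE b cs b' ds :
  canon (Node b cs) = canon (Node b' ds) <->
  b = b' /\ perm_eq (map canon cs) (map canon ds).
Proof.
have sortP := perm_sortP pickle_le_total pickle_le_trans pickle_le_anti.
by split=> [[-> /sortP] | [-> /sortP /= ->]].
Qed.

Lemma perm_cons_mid (T : eqType) (x : T) s s1 s2 :
  perm_eq (x :: s) (s1 ++ x :: s2) = perm_eq s (s1 ++ s2).
Proof. by rewrite perm_sym -cat1s perm_catCA perm_cons perm_sym. Qed.

Scheme iso_mind := Induction for iso Sort Prop
with iso_list_mind := Induction for iso_list Sort Prop.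

Lemma iso_canon s t : iso s t -> canon s = canon t.
Proof.
move=> st; apply: (@iso_mind (fun s t _ => canon s = canon t)
   (fun cs ds _ => perm_eq (map canon cs) (map canon ds))) st.
- by move=> b cs ds _ cds; apply/canon_nodeE.
- exact: perm_refl.
- move=> c cs d ds1 ds2 _ cd _ cds.
  by rewrite map_cat /= cd perm_cons_mid -map_cat.
Qed.

Lemma canon_iso s t : canon s = canon t -> iso s t.
Proof.
elim/mtree_ind': s t => b cs IH [b' ds] /canon_nodeE [<- cds]; constructor.
elim: cs ds IH cds => [|c cs IHcs] ds IH cds.
  by case: ds cds => [_|d ds /perm_size //]; exact: iso_nil.
have : canon c \in map canon ds by rewrite -(perm_mem cds) mem_head.
case/mapP=> d dds cd; case/splitPr: dds cds => ds1 ds2.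
rewrite map_cat /= -cd perm_cons_mid -map_cat => cds.
apply: iso_cons; first by apply: IH; [left|].
by apply: IHcs => // c' c'cs; apply: IH; right.
Qed.

Lemma isoE s t : iso s t <-> canon s = canon t.
Proof. by split; [apply: iso_canon | apply: canon_iso]. Qed.

Lemma iso_refl t : iso t t.
Proof. exact/isoE. Qed.

Lemma iso_sym s t : iso s t -> iso t s.
Proof. by move/isoE=> st; apply/isoE. Qed.

Lemma iso_trans s t u : iso s t -> iso t u -> iso s u.
Proof. by move=> /isoE st /isoE tu; apply/isoE; rewrite st. Qed.

Lemma iso_mark s t : iso s t -> mark s = mark t.
Proof. by case. Qed.

Lemma mark_canon t : mark (canon t) = mark t.
Proof. by case: t. Qed.

Lemma has_mark_children_canon t :
  has mark (children (canon t)) = has mark (children t).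
Proof.
case: t => b cs /=; rewrite (perm_has _ (permEl (perm_sort _ _))) has_map.
by apply: eq_has => c; apply: mark_canon.
Qed.

Lemma iso_has_mark_children s t :
  iso s t -> has mark (children s) = has mark (children t).
Proof.
by move/isoE=> st; rewrite -has_mark_children_canon st has_mark_children_canon.
Qed.

Lemma iso_list_In cs ds c : iso_list cs ds -> List.In c cs ->
  exists2 d, List.In d ds & iso c d.
Proof.
elim=> // c0 cs0 d ds1 ds2 c0d _ IH /= [<-|/IH[d' d'ds cd']].
  by exists d => //; apply: List.in_or_app; right; left.
exists d' => //; apply: List.in_or_app.
by case: (List.in_app_or _ _ _ d'ds); [left | right; right].
Qed.

Lemma subtree_iso s t t' : subtree s t -> iso t t' ->
  exists2 s', subtree s' t' & iso s s'.
Proof.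
move=> st; elim: st t' => [|u c uc _ IH] t' ut'.
  by exists t'; first exact: st_refl.
case: ut' uc => b cs ds cds /= uc.
have [d dds cd] := iso_list_In cds uc.
have [s' ds' ss'] := IH d cd.
by exists s' => //; apply: (@st_child s' (Node b ds) d).
Qed.

Lemma iso_children_nil s t : iso s t -> children t = [::] -> children s = [::].
Proof. by case=> b cs ds [] // c cs' d [] // ds2. Qed.

Definition marked_leaves (t : mtree) : Prop :=
  forall s, subtree s t -> mark s -> children s = [::].

Lemma marked_leaves_iso t t' : iso t t' -> marked_leaves t' -> marked_leaves t.
Proof.
move=> tt' leaves' s st ms; have [s' st' ss'] := subtree_iso st tt'.
by rewrite (iso_mark ss') in ms; apply: iso_children_nil ss' (leaves' s' st' ms).
Qed.

Lemma subtree_inv s t : subtree s t ->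
  s = t \/ exists2 c, List.In c (children t) & subtree s c.
Proof. by case=> [|u c uc sc]; [left | right; exists c]. Qed.

Lemma In_nseq (T : Type) (x y : T) n : List.In y (nseq n x) -> y = x.
Proof. by elim: n => //= n IH [<- | /IH]. Qed.

Definition leaf : mtree := Node true [::].

Lemma subtree_leaf s : subtree s leaf -> s = leaf.
Proof. by case/subtree_inv => [|[c []]]. Qed.

(* The path v_0 (root), v_1, ..., v_m of 0-marked vertices, with a 1-marked
   leaves attached to v_0 and r_i attached to v_(i+1). *)
Fixpoint caterpillar (a : nat) (r : seq nat) : mtree :=
  Node false (nseq a leaf ++ if r is b :: r' then [:: caterpillar b r'] else [::]).

Definition caterpillar_tail (r : seq nat) : seq mtree :=
  if r is b :: r' then [:: caterpillar b r'] else [::].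

Lemma caterpillarE a r :
  caterpillar a r = Node false (nseq a leaf ++ caterpillar_tail r).
Proof. by case: r. Qed.

Definition caterpillar_of (p : nat * seq nat) : mtree := caterpillar p.1 p.2.

Lemma mark_caterpillar a r : mark (caterpillar a r) = false.
Proof. by rewrite caterpillarE. Qed.

Lemma count_mark_caterpillar_tail r :
  count mark (map canon (caterpillar_tail r)) = 0.
Proof. by case: r => //= b r; rewrite mark_canon mark_caterpillar. Qed.

Lemma marked_leaves_caterpillar a r : marked_leaves (caterpillar a r).
Proof.
elim: r a => [|b r IH] a s /subtree_inv[-> | [c c_in sc]];
  rewrite ?mark_caterpillar //; rewrite caterpillarE /= in c_in;
  case: (List.in_app_or _ _ _ c_in) => [c_leaf | c_tail];
  try by move: sc; rewrite (In_nseq c_leaf) => /subtree_leaf ->.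
- by [].
- by case: c_tail => [cb | []]; move: sc; rewrite -cb; apply: IH.
Qed.

(* Operation (i) for [b = true], operation (ii) for [b = false]. *)
Definition grow (b : bool) (p : nat * seq nat) : nat * seq nat :=
  if b then (p.1.+1, p.2) else (1, p.1.-1 :: p.2).

Lemma step_caterpillar s s' p : iso s (caterpillar_of p) -> step s s' ->
  exists b, iso s' (caterpillar_of (grow b p)).
Proof.
case: p => a r /isoE; rewrite /caterpillar_of caterpillarE /= => + st.
case: st => [m cs | m cs1 ds cs2] /canon_nodeE[->];
  rewrite !map_cat map_nseq => cs_perm.
  by exists true; rewrite /= caterpillarE; apply/isoE/canon_nodeE;
    rewrite /= map_cat map_nseq perm_cons.
(* A 1-marked child of the root of a caterpillar is one of its leaves. *)
have : canon (Node true ds) \in nseq a leaf ++ map canon (caterpillar_tail r).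
  by rewrite -(perm_mem cs_perm) mem_cat /= inE eqxx orbT.
rewrite mem_cat mem_nseq => /orP[/andP[a_gt0 /eqP ds_leaf] | ds_tail]; last first.
  have : has mark (map canon (caterpillar_tail r)).
    by apply/hasP; exists (canon (Node true ds)).
  by rewrite has_count count_mark_caterpillar_tail.
have ds_nil : ds = [::].
  move/(congr1 (size \o children)): ds_leaf.
  by rewrite /= size_sort size_map => /size0nil.
rewrite {}ds_nil in cs_perm *.
case: a a_gt0 cs_perm {ds_leaf} => // a _ cs_perm.
have E : canon (Node false (cs1 ++ cs2)) = canon (caterpillar a r).
  rewrite caterpillarE; apply/canon_nodeE; split=> //.
  by move: cs_perm; rewrite !map_cat map_nseq /= perm_sym perm_cons_mid perm_sym.
by exists false; apply/isoE; rewrite /= -E.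
Qed.

Lemma caterpillar_step p b : 0 < p.1 ->
  step (caterpillar_of p) (caterpillar_of (grow b p)).
Proof.
case: p => [[|a] r] //= _; rewrite /caterpillar_of /= !caterpillarE.
case: b => /=; first exact: step_add.
rewrite [caterpillar a r]caterpillarE.
exact: (step_reroot false [::] [::] (nseq a leaf ++ caterpillar_tail r)).
Qed.

Lemma caterpillar_of_inj p q :
  iso (caterpillar_of p) (caterpillar_of q) -> p = q.
Proof.
case: p q => a1 r1 [a2 r2]; rewrite /caterpillar_of /=.
elim: r1 a1 a2 r2 => [|b1 r1 IH] a1 a2 r2;
  rewrite isoE !caterpillarE => /canon_nodeE[_]; rewrite !map_cat !map_nseq => cperm;
  have a12 : a1 = a2 by move/permP/(_ mark): cperm;
    rewrite !count_cat !count_nseq !count_mark_caterpillar_tail /= !mul1n !addn0.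
all: subst a2; rewrite perm_cat2l in cperm; congr (_, _).
  by case: r2 cperm => // b2 r2 /perm_size.
case: r2 cperm => [/perm_size // | b2 r2 /= cperm].
have : canon (caterpillar b1 r1) \in [:: canon (caterpillar b2 r2)].
  by rewrite -(perm_mem cperm) mem_head.
by rewrite mem_seq1 => /eqP/isoE/IH[-> ->].
Qed.

Lemma grow_inj b1 b2 p1 p2 : 0 < p1.1 -> 0 < p2.1 ->
  grow b1 p1 = grow b2 p2 -> b1 = b2 /\ p1 = p2.
Proof.
case: p1 p2 => [[|a1] r1] [[|a2] r2] //= _ _.
by case: b1; case: b2 => // -[-> ->].
Qed.

(* In [b :: bs], the operation [b] is the last one applied. *)
Fixpoint spine_of_bits (bs : seq bool) : nat * seq nat :=
  if bs is b :: bs' then grow b (spine_of_bits bs') else (1, [::]).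

Lemma spine_of_bits_gt0 bs : 0 < (spine_of_bits bs).1.
Proof. by case: bs => [|[] bs]. Qed.

Lemma spine_of_bits_inj : injective spine_of_bits.
Proof.
elim=> [|b1 bs1 IH] [|b2 bs2] //=.
- by have := spine_of_bits_gt0 bs2; case: b2 (spine_of_bits bs2) => -[[|a] r].
- by have := spine_of_bits_gt0 bs1; case: b1 (spine_of_bits bs1) => -[[|a] r].
move/(grow_inj (spine_of_bits_gt0 _) (spine_of_bits_gt0 _)) => [-> /IH ->] //.
Qed.

Lemma inM_spine n t :
  inM n.+1 t <-> exists bs : n.-tuple bool, iso t (caterpillar_of (spine_of_bits bs)).
Proof.
elim: n t => [|n IH] t.
  by split=> [tT1 | [bs]]; [exists [tuple] | rewrite tuple0].
change ((exists s, inM n.+1 s /\ obtained_from s t) <->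
  exists bs : n.+1.-tuple bool, iso t (caterpillar_of (spine_of_bits bs))).
split=> [[s [/IH[bs sbs] [s' [ss' ts']]]] | [bs]].
  have [b s'b] := step_caterpillar sbs ss'.
  by exists [tuple of b :: bs]; apply: iso_trans ts' s'b.
case/tupleP: bs => b bs tb; exists (caterpillar_of (spine_of_bits bs)).
split; first by apply/IH; exists bs; apply: iso_refl.
by exists (caterpillar_of (spine_of_bits (b :: bs))); split; last exact: tb;
  apply: caterpillar_step (spine_of_bits_gt0 bs).
Qed.

Lemma inM_has_marked_child n t : inM n.+1 t -> has mark (children t).
Proof.
case/inM_spine=> bs /iso_has_mark_children ->.
rewrite /caterpillar_of caterpillarE /= has_cat.
by case: (spine_of_bits bs) (spine_of_bits_gt0 bs) => -[].
Qed.

Lemma inM_marked_leaves n t : inM n.+1 t -> marked_leaves t.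
Proof.
by case/inM_spine=> bs /marked_leaves_iso; apply; apply: marked_leaves_caterpillar.
Qed.

Lemma obtained_from_inM_iso n t s1 s2 : inM n.+1 s1 -> inM n.+1 s2 ->
  obtained_from s1 t -> obtained_from s2 t -> iso s1 s2.
Proof.
move=> /inM_spine[bs1 s1bs1] /inM_spine[bs2 s2bs2] [t1 [s1t1 tt1]] [t2 [s2t2 tt2]].
have [b1 t1b1] := step_caterpillar s1bs1 s1t1.
have [b2 t2b2] := step_caterpillar s2bs2 s2t2.
have : spine_of_bits (b1 :: bs1) = spine_of_bits (b2 :: bs2).
  apply: caterpillar_of_inj; apply: iso_trans (iso_sym t1b1) _.
  by apply: iso_trans (iso_sym tt1) (iso_trans tt2 t2b2).
case/spine_of_bits_inj => _ /val_inj bs12.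
by apply: iso_trans s1bs1 _; rewrite bs12; apply: iso_sym.
Qed.

Lemma card_bits n : #|{: n.-tuple bool}| = 2 ^ n.
Proof. by rewrite card_tuple card_bool. Qed.

Lemma inM_enum n : exists f : 'I_(2 ^ n) -> mtree,
  [/\ forall i, inM n.+1 (f i),
      forall i j, iso (f i) (f j) -> i = j &
      forall t, inM n.+1 t -> exists i, iso t (f i)].
Proof.
pose bits (i : 'I_(2 ^ n)) : n.-tuple bool :=
  enum_val (cast_ord (esym (card_bits n)) i).
exists (fun i => caterpillar_of (spine_of_bits (bits i))); split.
- by move=> i; apply/inM_spine; exists (bits i); apply: iso_refl.
- by move=> i j /caterpillar_of_inj/spine_of_bits_inj/val_inj/enum_val_inj/cast_ord_inj.
- move=> t /inM_spine[bs tbs]; exists (cast_ord (card_bits n) (enum_rank bs)).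
  by rewrite /bits cast_ordK enum_rankK.
Qed.

Theorem lemma8p2 (k : nat) (hk : 1 <= k) :
  (* (1) the root has a 1-marked neighbour *)
  (forall t, inM k t -> has mark (children t)) /\
  (* (2) every 1-marked vertex is a leaf *)
  (forall t, inM k t ->
     (mark t -> root_is_leaf t) /\
     (forall s, nonroot_vertex s t -> mark s -> nonroot_is_leaf s)) /\
  (* (3) unique predecessor class in M_{k-1} *)
  (2 <= k -> forall t, inM k t ->
     (exists s, inM k.-1 s /\ obtained_from s t) /\
     (forall s1 s2, inM k.-1 s1 -> inM k.-1 s2 ->
        obtained_from s1 t -> obtained_from s2 t -> iso s1 s2)) /\
  (* (4) |M_k| = 2^(k-1): a bijection between 'I_(2^(k-1)) and the classes *)
  (exists f : 'I_(2 ^ k.-1) -> mtree,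
     (forall i, inM k (f i)) /\
     (forall i j, iso (f i) (f j) -> i = j) /\
     (forall t, inM k t -> exists i, iso t (f i))).
Proof.
case: k hk => // n _; split; [|split; [|split]].
- exact: inM_has_marked_child.
- move=> t tM; have leaves := inM_marked_leaves tM; split.
    move=> /(leaves t (st_refl t)) t_nil.
    by have := inM_has_marked_child tM; rewrite t_nil.
  by move=> s [c [tc sc]]; apply: leaves; apply: st_child tc sc.
- case: n => // n _ t tM; split; first exact: tM.
  exact: obtained_from_inM_iso.
- by have [f [fM f_inj f_onto]] := inM_enum n; exists f.
Qed.
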